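(* Let $(x^1,x^2,z)$ be real coordinates, $a,b\in\{1,2\}$, let $g_{ab}$ be functions of $(x^1,x^2,z)$ forming a matrix of Euclidean signature, let $|\tilde g|=(\det g_{ab})^{1/2}$, let $\beta_a$ and $\beta>0$ be functions of $(x^1,x^2)$ only (i.e. $\beta_{a,z}=\beta_{,z}=0$), and let $c$ be a constant. Then the momentum constraint $\nabla_iT^{ij}=0$ is satisfied by each of the following data: (1) $g=\beta|\tilde g|^{-2/3}(dz+\beta_adx^a)^2+g_{ab}dx^adx^b$ and $\pm T^{ij}=\delta^i_z\delta^j_z+\big(c+\tfrac12\beta|\tilde g|^{-2/3}\big)g^{ij}$; (2) $g=(dz+\beta_adx^a)^2+g_{ab}dx^adx^b$ and $\pm T^{ij}=\beta|\tilde g|^{-1}\delta^i_z\delta^j_z+c\,g^{ij}$. Moreover, the function $\beta$ can be transformed to $1$ by a change of the coordinates $x^a$.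
   Context: Initial data: Riemannian metric $g_{ij}$ and symmetric tensor $K_{ij}$ on a 3-manifold; $H=g^{ij}K_{ij}$, $T^{ij}=K^{ij}-Hg^{ij}$. Momentum constraint: $\nabla_iT^{ij}=0$, with $\nabla$ the Levi-Civita connection of $g$. *)

From Stdlib Require Import Reals.
From Coquelicot Require Import Coquelicot.
Open Scope R_scope.

Inductive idx := I1 | I2 | IZ.

Definition sum3 (f : idx -> R) : R := f I1 + f I2 + f IZ.

Definition Field3 := R -> R -> R -> R.
Definition Field2 := R -> R -> R.
Definition Tensor := idx -> idx -> Field3.

Definition pd (i : idx) (f : Field3) (x1 x2 z : R) : R :=
  match i with
  | I1 => Derive (fun t => f t x2 z) x1
  | I2 => Derive (fun t => f x1 t z) x2
  | IZ => Derive (fun t => f x1 x2 t) z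
  end.

Definition ex_pd (i : idx) (f : Field3) (x1 x2 z : R) : Prop :=
  match i with
  | I1 => ex_derive (fun t => f t x2 z) x1
  | I2 => ex_derive (fun t => f x1 t z) x2
  | IZ => ex_derive (fun t => f x1 x2 t) z
  end.

Definition pd2 (i : idx) (f : Field2) (x1 x2 : R) : R :=
  match i with
  | I1 => Derive (fun t => f t x2) x1
  | I2 => Derive (fun t => f x1 t) x2
  | IZ => 0
  end.

Definition ex_pd2 (i : idx) (f : Field2) (x1 x2 : R) : Prop :=
  match i with
  | I1 => ex_derive (fun t => f t x2) x1
  | I2 => ex_derive (fun t => f x1 t) x2
  | IZ => True
  end.

Definition open3 (U : R -> R -> R -> Prop) : Prop :=
  open (fun q : R * R * R => U (fst (fst q)) (snd (fst q)) (snd q)).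
Definition open2 (V : R -> R -> Prop) : Prop :=
  open (fun q : R * R => V (fst q) (snd q)).

Definition C1_3 (U : R -> R -> R -> Prop) (f : Field3) : Prop :=
  forall x1 x2 z, U x1 x2 z -> forall i,
    ex_pd i f x1 x2 z /\
    continuous (fun q : R * R * R => pd i f (fst (fst q)) (snd (fst q)) (snd q))
               (x1, x2, z).

Definition C1_2 (D : R -> R -> Prop) (f : Field2) : Prop :=
  forall x1 x2, D x1 x2 ->
    continuous (fun q : R * R => f (fst q) (snd q)) (x1, x2) /\
    forall i, ex_pd2 i f x1 x2 /\
    continuous (fun q : R * R => pd2 i f (fst q) (snd q)) (x1, x2).

(** 3x3 linear algebra: signed cofactors (cyclic formula), determinant,
    inverse matrix. *)
Definition nxt (i : idx) : idx := match i with I1 => I2 | I2 => IZ | IZ => I1 end.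

Definition cof (M : idx -> idx -> R) (i j : idx) : R :=
  M (nxt i) (nxt j) * M (nxt (nxt i)) (nxt (nxt j))
  - M (nxt i) (nxt (nxt j)) * M (nxt (nxt i)) (nxt j).

Definition det3 (M : idx -> idx -> R) : R := sum3 (fun j => M I1 j * cof M I1 j).

Definition inv3 (M : idx -> idx -> R) (i j : idx) : R := cof M j i / det3 M.

Definition ginv (G : Tensor) : Tensor :=
  fun i j x1 x2 z => inv3 (fun k l => G k l x1 x2 z) i j.

Definition christoffel (G : Tensor) (k i j : idx) : Field3 :=
  fun x1 x2 z => / 2 * sum3 (fun l => ginv G k l x1 x2 z *
     (pd i (G j l) x1 x2 z + pd j (G i l) x1 x2 z - pd l (G i j) x1 x2 z)).

Definition divT (G T : Tensor) (j : idx) : Field3 :=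
  fun x1 x2 z =>
    sum3 (fun i => pd i (T i j) x1 x2 z)
    + sum3 (fun i => sum3 (fun k => christoffel G i i k x1 x2 z * T k j x1 x2 z))
    + sum3 (fun i => sum3 (fun k => christoffel G j i k x1 x2 z * T i k x1 x2 z)).

Definition momentum_constraint (U : R -> R -> R -> Prop) (G T : Tensor) : Prop :=
  forall x1 x2 z, U x1 x2 z -> forall j, divT G T j x1 x2 z = 0.

Definition det2 (g11 g12 g22 : Field3) : Field3 :=
  fun x1 x2 z => g11 x1 x2 z * g22 x1 x2 z - g12 x1 x2 z * g12 x1 x2 z.

Definition absg (g11 g12 g22 : Field3) : Field3 :=
  fun x1 x2 z => sqrt (det2 g11 g12 g22 x1 x2 z).

Definition gab (g11 g12 g22 : Field3) : Tensor :=
  fun i j => match i, j with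
  | I1, I1 => g11 | I1, I2 => g12 | I2, I1 => g12 | I2, I2 => g22
  | _, _ => fun _ _ _ => 0 end.

Definition theta (b1 b2 : Field2) (i : idx) : Field2 :=
  match i with I1 => b1 | I2 => b2 | IZ => fun _ _ => 1 end.

Definition dzz (i j : idx) : R :=
  match i, j with IZ, IZ => 1 | _, _ => 0 end.

Definition metric_form (w : Field3) (g11 g12 g22 : Field3) (b1 b2 : Field2) : Tensor :=
  fun i j x1 x2 z => w x1 x2 z * theta b1 b2 i x1 x2 * theta b1 b2 j x1 x2
                     + gab g11 g12 g22 i j x1 x2 z.

Definition w1 (b : Field2) (g11 g12 g22 : Field3) : Field3 :=
  fun x1 x2 z => b x1 x2 * Rpower (absg g11 g12 g22 x1 x2 z) (- (2 / 3)).

Definition metric1 (b : Field2) (g11 g12 g22 : Field3) (b1 b2 : Field2) : Tensor :=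
  metric_form (w1 b g11 g12 g22) g11 g12 g22 b1 b2.

(** s = +1 or -1 encodes the sign in "+- T^{ij}". *)
Definition T1 (s c : R) (b : Field2) (g11 g12 g22 : Field3) (b1 b2 : Field2) : Tensor :=
  fun i j x1 x2 z => s * (dzz i j + (c + / 2 * w1 b g11 g12 g22 x1 x2 z)
                            * ginv (metric1 b g11 g12 g22 b1 b2) i j x1 x2 z).

Definition metric2 (g11 g12 g22 : Field3) (b1 b2 : Field2) : Tensor :=
  metric_form (fun _ _ _ => 1) g11 g12 g22 b1 b2.

Definition T2 (s c : R) (b : Field2) (g11 g12 g22 : Field3) (b1 b2 : Field2) : Tensor :=
  fun i j x1 x2 z => s * (b x1 x2 / absg g11 g12 g22 x1 x2 z * dzz i j
                            + c * ginv (metric2 g11 g12 g22 b1 b2) i j x1 x2 z).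

Definition jac (phi1 phi2 : Field2) (k i : idx) (x1 x2 : R) : R :=
  match k with
  | I1 => pd2 i phi1 x1 x2
  | I2 => pd2 i phi2 x1 x2
  | IZ => match i with IZ => 1 | _ => 0 end
  end.

Definition coord_change (V : R -> R -> Prop) (phi1 phi2 : Field2) : Prop :=
  C1_2 V phi1 /\ C1_2 V phi2 /\
  (forall x1 x2 y1 y2, V x1 x2 -> V y1 y2 ->
      phi1 x1 x2 = phi1 y1 y2 -> phi2 x1 x2 = phi2 y1 y2 -> x1 = y1 /\ x2 = y2) /\
  (forall x1 x2, V x1 x2 ->
      pd2 I1 phi1 x1 x2 * pd2 I2 phi2 x1 x2 - pd2 I2 phi1 x1 x2 * pd2 I1 phi2 x1 x2 <> 0).

Definition transforms_to (U : R -> R -> R -> Prop) (V : R -> R -> Prop)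
    (phi1 phi2 : Field2) (G T G' T' : Tensor) : Prop :=
  forall x1 x2 z, U x1 x2 z -> V x1 x2 ->
    (forall i j, G i j x1 x2 z =
       sum3 (fun k => sum3 (fun l => jac phi1 phi2 k i x1 x2 * jac phi1 phi2 l j x1 x2
                                     * G' k l (phi1 x1 x2) (phi2 x1 x2) z))) /\
    (forall k l, T' k l (phi1 x1 x2) (phi2 x1 x2) z =
       sum3 (fun i => sum3 (fun j => jac phi1 phi2 k i x1 x2 * jac phi1 phi2 l j x1 x2
                                     * T i j x1 x2 z))).

(* In both cases the metric has the form w (dz + beta_a dx^a)^2 + g_ab dx^a dx^b and
   T^{ij} = s (X^{ij} + F g^{ij}) with X^{ij} = f delta^i_z delta^j_z.  As the inverse
   metric is parallel, nabla_i T^{ij} = s (nabla_i X^{ij} + g^{ij} d_i F), and computing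
   the Christoffel symbols of such a metric shows that this vanishes as soon as w, resp.
   f, depends on z only through the factor (det g_ab)^(-1/3), resp. (det g_ab)^(-1/2):
   case (1) is w = beta |g~|^(-2/3), f = 1, F = c + w/2, and case (2) is w = 1,
   f = beta |g~|^(-1), F = c.

   For the normalisation of beta take x'^1 = int_{x^1_0}^{x^1} K(t, x^2) dt and
   x'^2 = x^2, with K = beta^(3/2) in case (1) and K = beta in case (2).  Since K > 0 this
   is a local change of coordinates; it keeps the shape of dz + beta_a dx^a and divides
   |g~| by K, which turns beta |g~|^(-2/3) into |g~'|^(-2/3) and beta |g~|^(-1) into
   |g~'|^(-1). *)

From Stdlib Require Import Reals Lra FunctionalExtensionality ClassicalEpsilon.
From Coquelicot Require Import Coquelicot.
Open Scope R_scope.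

(** * Partial derivatives *)

Definition coord_line (k : idx) (f : Field3) (x1 x2 z : R) : R -> R :=
  match k with
  | I1 => fun t => f t x2 z
  | I2 => fun t => f x1 t z
  | IZ => fun t => f x1 x2 t
  end.

Definition coord (k : idx) (x1 x2 z : R) : R :=
  match k with I1 => x1 | I2 => x2 | IZ => z end.

Definition is_pd (k : idx) (f : Field3) (x1 x2 z d : R) : Prop :=
  is_derive (coord_line k f x1 x2 z) (coord k x1 x2 z) d.

Lemma is_pd_unique k f x1 x2 z d : is_pd k f x1 x2 z d -> pd k f x1 x2 z = d.
Proof. destruct k; apply is_derive_unique. Qed.

Lemma is_pd_field2 k (b : Field2) x1 x2 z :
  ex_pd2 k b x1 x2 -> is_pd k (fun a c _ => b a c) x1 x2 z (pd2 k b x1 x2).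
Proof.
destruct k; simpl; intros H;
  [exact (Derive_correct _ _ H).. | exact (is_derive_const (b x1 x2) z)].
Qed.

Lemma is_pd_const k (c : R) x1 x2 z : is_pd k (fun _ _ _ => c) x1 x2 z 0.
Proof. destruct k; exact (is_derive_const c _). Qed.

Lemma is_pd_mult k f g x1 x2 z df dg :
  is_pd k f x1 x2 z df -> is_pd k g x1 x2 z dg ->
  is_pd k (fun a b c => f a b c * g a b c) x1 x2 z (df * g x1 x2 z + f x1 x2 z * dg).
Proof. destruct k; intros Hf Hg; exact (is_derive_mult _ _ _ _ _ Hf Hg Rmult_comm). Qed.

Lemma is_pd_comp k f (h : R -> R) x1 x2 z df dh :
  is_pd k f x1 x2 z df -> is_derive h (f x1 x2 z) dh ->
  is_pd k (fun a b c => h (f a b c)) x1 x2 z (dh * df).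
Proof.
intros Hf Hh; replace (dh * df) with (scal df dh) by (rewrite Rmult_comm; reflexivity).
destruct k; exact (is_derive_comp h _ _ _ _ Hh Hf).
Qed.

Lemma is_pd_scal_plus_mult k s X F N x1 x2 z dX dF dN :
  is_pd k X x1 x2 z dX -> is_pd k F x1 x2 z dF -> is_pd k N x1 x2 z dN ->
  is_pd k (fun a b c => s * (X a b c + F a b c * N a b c)) x1 x2 z
    (s * (dX + dF * N x1 x2 z + F x1 x2 z * dN)).
Proof.
unfold is_pd; intros HX HF HN.
pose proof (is_derive_unique _ _ _ HX); pose proof (is_derive_unique _ _ _ HF);
pose proof (is_derive_unique _ _ _ HN).
assert (EX : ex_derive (coord_line k X x1 x2 z) (coord k x1 x2 z)) by (eexists; eauto).
assert (EF : ex_derive (coord_line k F x1 x2 z) (coord k x1 x2 z)) by (eexists; eauto).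
assert (EN : ex_derive (coord_line k N x1 x2 z) (coord k x1 x2 z)) by (eexists; eauto).
destruct k; simpl in *; auto_derive; auto; rewrite ?H, ?H0, ?H1; ring.
Qed.

Lemma is_derive_inv3 (m : idx -> idx -> R -> R) (dm : idx -> idx -> R) t i j :
  (forall a b, is_derive (m a b) t (dm a b)) ->
  det3 (fun a b => m a b t) <> 0 ->
  is_derive (fun t => inv3 (fun a b => m a b t) i j) t
   (- sum3 (fun a => sum3 (fun b =>
        inv3 (fun a b => m a b t) i a * dm a b * inv3 (fun a b => m a b t) b j))).
Proof.
intros Hm Hdet.
assert (HD : forall a b, Derive (m a b) t = dm a b) by (intros; apply is_derive_unique; auto).
assert (HE : forall a b, ex_derive (m a b) t) by (intros; eexists; eauto).
destruct i, j; cbv [sum3 inv3 cof det3 nxt] in *;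
auto_derive; try solve [repeat split; auto]; rewrite ?HD; field; auto.
Qed.

Lemma is_pd_ginv k G x1 x2 z (dG : idx -> idx -> R) a b :
  (forall c d, is_pd k (G c d) x1 x2 z (dG c d)) ->
  det3 (fun c d => G c d x1 x2 z) <> 0 ->
  is_pd k (ginv G a b) x1 x2 z
    (- sum3 (fun p => sum3 (fun q => ginv G a p x1 x2 z * dG p q * ginv G q b x1 x2 z))).
Proof.
intros HG Hdet.
pose proof (is_derive_inv3 (fun c d => coord_line k (G c d) x1 x2 z) dG _ a b HG) as H.
destruct k; exact (H Hdet).
Qed.

Lemma is_pd_affine k (c m : R) f x1 x2 z d :
  is_pd k f x1 x2 z d -> is_pd k (fun a b e => c + m * f a b e) x1 x2 z (m * d).
Proof.
unfold is_pd; intros Hf; pose proof (is_derive_unique _ _ _ Hf).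
assert (Ef : ex_derive (coord_line k f x1 x2 z) (coord k x1 x2 z)) by (eexists; eauto).
destruct k; simpl in *; auto_derive; auto; rewrite H; ring.
Qed.

Lemma is_pd_mult_const k (m : R) f x1 x2 z d :
  is_pd k f x1 x2 z d -> is_pd k (fun a b e => f a b e * m) x1 x2 z (d * m).
Proof.
unfold is_pd; intros Hf; pose proof (is_derive_unique _ _ _ Hf).
assert (Ef : ex_derive (coord_line k f x1 x2 z) (coord k x1 x2 z)) by (eexists; eauto).
destruct k; simpl in *; auto_derive; auto; rewrite H; ring.
Qed.

(** * The metric and the divergence at a point *)

Definition theta_at (u v : R) (a : idx) : R :=
  match a with I1 => u | I2 => v | IZ => 1 end.

Definition dtheta_at (du dv : R) (a : idx) : R :=
  match a with I1 => du | I2 => dv | IZ => 0 end.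

Definition gab_at (p q r : R) (a b : idx) : R :=
  match a, b with
  | I1, I1 => p | I1, I2 => q | I2, I1 => q | I2, I2 => r | _, _ => 0
  end.

Definition metric_form_at (w u v p q r : R) (a b : idx) : R :=
  w * theta_at u v a * theta_at u v b + gab_at p q r a b.

Definition dmetric_form_at (w dw u v du dv dp dq dr : R) (a b : idx) : R :=
  dw * theta_at u v a * theta_at u v b
  + w * (dtheta_at du dv a * theta_at u v b + theta_at u v a * dtheta_at du dv b)
  + gab_at dp dq dr a b.

Lemma metric_form_at_eq W g11 g12 g22 b1 b2 x1 x2 z :
  (fun a b => metric_form W g11 g12 g22 b1 b2 a b x1 x2 z) =
  metric_form_at (W x1 x2 z) (b1 x1 x2) (b2 x1 x2)
    (g11 x1 x2 z) (g12 x1 x2 z) (g22 x1 x2 z).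
Proof.
apply functional_extensionality; intro a; apply functional_extensionality; intro b.
destruct a, b; reflexivity.
Qed.

Lemma det3_metric_form_at w u v p q r :
  det3 (metric_form_at w u v p q r) = w * (p * r - q * q).
Proof. cbv [det3 sum3 cof nxt metric_form_at theta_at gab_at]; ring. Qed.

Lemma inv3_sym (M : idx -> idx -> R) a b :
  (forall a b, M a b = M b a) -> inv3 M a b = inv3 M b a.
Proof.
intros HM; unfold inv3; f_equal.
destruct a, b; cbv [cof nxt]; rewrite ?(HM I2 I1), ?(HM IZ I1), ?(HM IZ I2); ring.
Qed.

Lemma metric_form_at_sym w u v p q r a b :
  metric_form_at w u v p q r a b = metric_form_at w u v p q r b a.
Proof. destruct a, b; cbv [metric_form_at theta_at gab_at]; ring. Qed.

Lemma dmetric_form_at_sym w dw u v du dv dp dq dr a b :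
  dmetric_form_at w dw u v du dv dp dq dr a b = dmetric_form_at w dw u v du dv dp dq dr b a.
Proof. destruct a, b; cbv [dmetric_form_at theta_at dtheta_at gab_at]; ring. Qed.

(* [N] stands for the inverse metric and [dG l a b] for [d_l g_ab] at a point. *)
Definition christoffel_at (N : idx -> idx -> R) (dG : idx -> idx -> idx -> R) k i j : R :=
  / 2 * sum3 (fun l => N k l * (dG i j l + dG j i l - dG l i j)).

Definition div_at (N : idx -> idx -> R) (dG dT : idx -> idx -> idx -> R)
    (T : idx -> idx -> R) (j : idx) : R :=
  sum3 (fun i => dT i i j)
  + sum3 (fun i => sum3 (fun k => christoffel_at N dG i i k * T k j))
  + sum3 (fun i => sum3 (fun k => christoffel_at N dG j i k * T i k)).

Lemma divT_eq_div_at G T x1 x2 z (dG dT : idx -> idx -> idx -> R) j :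
  (forall l a b, pd l (G a b) x1 x2 z = dG l a b) ->
  (forall k a b, pd k (T a b) x1 x2 z = dT k a b) ->
  divT G T j x1 x2 z =
  div_at (fun a b => ginv G a b x1 x2 z) dG dT (fun a b => T a b x1 x2 z) j.
Proof.
intros HG HT; unfold divT, christoffel, div_at, christoffel_at; cbv [sum3].
rewrite !HG, !HT; reflexivity.
Qed.

(* Metric compatibility: with [dN = - N dG N], the inverse metric is parallel. *)
Lemma div_at_plus_inverse (N : idx -> idx -> R) (dG dX : idx -> idx -> idx -> R)
    (X : idx -> idx -> R) F (dF : idx -> R) s j :
  (forall a b, N a b = N b a) -> (forall k a b, dG k a b = dG k b a) ->
  div_at N dG
    (fun k a b => s * (dX k a b + dF k * N a b
       + F * - sum3 (fun p => sum3 (fun q => N a p * dG k p q * N q b))))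
    (fun a b => s * (X a b + F * N a b)) j
  = s * (div_at N dG dX X j + sum3 (fun i => dF i * N i j)).
Proof.
intros HN HG.
destruct j; cbv [div_at christoffel_at sum3];
rewrite ?(HN I2 I1), ?(HN IZ I1), ?(HN IZ I2),
 ?(HG I1 I2 I1), ?(HG I1 IZ I1), ?(HG I1 IZ I2),
 ?(HG I2 I2 I1), ?(HG I2 IZ I1), ?(HG I2 IZ I2),
 ?(HG IZ I2 I1), ?(HG IZ IZ I1), ?(HG IZ IZ I2); field.
Qed.

(* The hypothesis on [dw IZ] says that [w] depends on [z] only through the
   factor [(det g_ab)^(-1/3)]. *)
Lemma div_at_dzz_weighted (w u v p q r : R) (dw du dv dp dq dr : idx -> R) j :
  w <> 0 -> p * r - q * q <> 0 -> du IZ = 0 -> dv IZ = 0 ->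
  dw IZ = - / 3 * w * (dp IZ * r + p * dr IZ - 2 * q * dq IZ) / (p * r - q * q) ->
  div_at (inv3 (metric_form_at w u v p q r))
    (fun k => dmetric_form_at w (dw k) u v (du k) (dv k) (dp k) (dq k) (dr k))
    (fun _ _ _ => 0) dzz j
  + sum3 (fun i => / 2 * dw i * inv3 (metric_form_at w u v p q r) i j) = 0.
Proof.
intros Hw HD Hu Hv Hdw.
assert (Hdet : w * (p * r - q * q) <> 0) by (apply Rmult_integral_contrapositive; auto).
destruct j; cbv [div_at christoffel_at sum3 inv3 cof det3 nxt metric_form_at
  dmetric_form_at theta_at dtheta_at gab_at dzz]; rewrite Hu, Hv, Hdw;
field; repeat split; auto;
match goal with |- ?e <> 0 => replace e with (w * (p * r - q * q)) by ring end; auto.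
Qed.

(* Likewise [f] depends on [z] only through the factor [(det g_ab)^(-1/2)]. *)
Lemma div_at_scaled_dzz (f u v p q r : R) (df du dv dp dq dr : idx -> R) j :
  p * r - q * q <> 0 -> du IZ = 0 -> dv IZ = 0 ->
  df IZ = - / 2 * f * (dp IZ * r + p * dr IZ - 2 * q * dq IZ) / (p * r - q * q) ->
  div_at (inv3 (metric_form_at 1 u v p q r))
    (fun k => dmetric_form_at 1 0 u v (du k) (dv k) (dp k) (dq k) (dr k))
    (fun k a b => df k * dzz a b) (fun a b => f * dzz a b) j = 0.
Proof.
intros HD Hu Hv Hdf.
destruct j; cbv [div_at christoffel_at sum3 inv3 cof det3 nxt metric_form_at
  dmetric_form_at theta_at dtheta_at gab_at dzz]; rewrite Hu, Hv, Hdf;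
field; repeat split; auto;
match goal with |- ?e <> 0 => replace e with (p * r - q * q) by ring end; auto.
Qed.

Lemma is_derive_Rpower_sqrt D : 0 < D ->
  is_derive (fun y => Rpower (sqrt y) (- (2 / 3))) D
    (Rpower (sqrt D) (- (2 / 3)) * (- / 3) / D).
Proof.
intros HD; pose proof (sqrt_lt_R0 D HD); pose proof (sqrt_sqrt D).
unfold Rpower; auto_derive; [repeat split; auto|].
set (r := sqrt D) in *; clearbody r; rewrite <- H0 by lra; field; lra.
Qed.

Lemma is_derive_inv_sqrt D : 0 < D ->
  is_derive (fun y => / sqrt y) D (- / 2 * / sqrt D / D).
Proof.
intros HD; pose proof (sqrt_lt_R0 D HD); pose proof (sqrt_sqrt D).
auto_derive; [split; auto; lra|].
set (r := sqrt D) in *; clearbody r; rewrite <- H0 by lra; field; lra.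
Qed.

Definition tensor_plus_ginv (s : R) (X : Tensor) (F : Field3) (G : Tensor) : Tensor :=
  fun i j x1 x2 z => s * (X i j x1 x2 z + F x1 x2 z * ginv G i j x1 x2 z).

Definition ddet2 (g11 g12 g22 : Field3) (k : idx) (x1 x2 z : R) : R :=
  pd k g11 x1 x2 z * g22 x1 x2 z + g11 x1 x2 z * pd k g22 x1 x2 z
  - 2 * g12 x1 x2 z * pd k g12 x1 x2 z.

Section MomentumAtPoint.

Variables (g11 g12 g22 : Field3) (b1 b2 : Field2) (x1 x2 z : R).
Hypothesis Hg : forall k, ex_pd k g11 x1 x2 z /\ ex_pd k g12 x1 x2 z /\ ex_pd k g22 x1 x2 z.
Hypothesis Hb : forall k, ex_pd2 k b1 x1 x2 /\ ex_pd2 k b2 x1 x2.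
Hypothesis HD : 0 < det2 g11 g12 g22 x1 x2 z.

Lemma is_pd_det2 k : is_pd k (det2 g11 g12 g22) x1 x2 z (ddet2 g11 g12 g22 k x1 x2 z).
Proof.
destruct (Hg k) as (E11 & E12 & E22); unfold is_pd, det2, ddet2.
destruct k; simpl in *; auto_derive; auto; ring.
Qed.

Lemma is_pd_metric_form W dW k a b :
  is_pd k W x1 x2 z dW ->
  is_pd k (metric_form W g11 g12 g22 b1 b2 a b) x1 x2 z
    (dmetric_form_at (W x1 x2 z) dW (b1 x1 x2) (b2 x1 x2) (pd2 k b1 x1 x2) (pd2 k b2 x1 x2)
       (pd k g11 x1 x2 z) (pd k g12 x1 x2 z) (pd k g22 x1 x2 z) a b).
Proof.
destruct (Hg k) as (E11 & E12 & E22); destruct (Hb k) as [E1 E2].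
unfold is_pd, metric_form; intros HW; pose proof (is_derive_unique _ _ _ HW).
assert (EW : ex_derive (coord_line k W x1 x2 z) (coord k x1 x2 z)) by (eexists; eauto).
destruct k, a, b; simpl in *; auto_derive; auto; rewrite ?H;
  cbv [dmetric_form_at theta_at dtheta_at gab_at]; ring.
Qed.

Lemma divT_metric_form_plus_ginv W (dW : idx -> R) s X F dX dF j :
  W x1 x2 z <> 0 ->
  (forall k, is_pd k W x1 x2 z (dW k)) ->
  (forall k a b, is_pd k (X a b) x1 x2 z (dX k a b)) ->
  (forall k, is_pd k F x1 x2 z (dF k)) ->
  let M := metric_form_at (W x1 x2 z) (b1 x1 x2) (b2 x1 x2)
             (g11 x1 x2 z) (g12 x1 x2 z) (g22 x1 x2 z) in
  let G := metric_form W g11 g12 g22 b1 b2 in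
  divT G (tensor_plus_ginv s X F G) j x1 x2 z =
  s * (div_at (inv3 M)
         (fun k => dmetric_form_at (W x1 x2 z) (dW k) (b1 x1 x2) (b2 x1 x2)
            (pd2 k b1 x1 x2) (pd2 k b2 x1 x2)
            (pd k g11 x1 x2 z) (pd k g12 x1 x2 z) (pd k g22 x1 x2 z))
         dX (fun a b => X a b x1 x2 z) j
       + sum3 (fun i => dF i * inv3 M i j)).
Proof.
intros HW0 HW HX HF M G.
set (dG := fun k => dmetric_form_at (W x1 x2 z) (dW k) (b1 x1 x2) (b2 x1 x2)
            (pd2 k b1 x1 x2) (pd2 k b2 x1 x2)
            (pd k g11 x1 x2 z) (pd k g12 x1 x2 z) (pd k g22 x1 x2 z)).
assert (HG : forall k a b, is_pd k (G a b) x1 x2 z (dG k a b))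
  by (intros; apply is_pd_metric_form, HW).
assert (HGM : (fun a b => G a b x1 x2 z) = M) by apply metric_form_at_eq.
assert (Hdet : det3 (fun a b => G a b x1 x2 z) <> 0).
{ rewrite HGM; unfold M; rewrite det3_metric_form_at.
  apply Rmult_integral_contrapositive; split; [auto | unfold det2 in HD; lra]. }
rewrite (divT_eq_div_at G _ x1 x2 z dG
  (fun k a b => s * (dX k a b + dF k * ginv G a b x1 x2 z + F x1 x2 z *
     - sum3 (fun p => sum3 (fun q => ginv G a p x1 x2 z * dG k p q * ginv G q b x1 x2 z)))) j).
- cbv beta delta [tensor_plus_ginv ginv]; rewrite HGM.
  apply div_at_plus_inverse.
  + intros; apply inv3_sym, metric_form_at_sym.
  + intros; apply dmetric_form_at_sym.
- intros; apply is_pd_unique, HG.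
- intros k a b; apply is_pd_unique, is_pd_scal_plus_mult; auto.
  apply is_pd_ginv; auto.
Qed.

Lemma divT_metric1_T1 b c s j :
  (forall k, ex_pd2 k b x1 x2) -> 0 < b x1 x2 ->
  divT (metric1 b g11 g12 g22 b1 b2) (T1 s c b g11 g12 g22 b1 b2) j x1 x2 z = 0.
Proof.
intros Eb Hbpos.
set (D := det2 g11 g12 g22 x1 x2 z) in HD.
set (A := Rpower (sqrt D) (- (2 / 3))).
set (dw := fun k => pd2 k b x1 x2 * A
   + b x1 x2 * (A * (- / 3) / D * ddet2 g11 g12 g22 k x1 x2 z)).
assert (Hw : forall k, is_pd k (w1 b g11 g12 g22) x1 x2 z (dw k)).
{ intro k; apply (is_pd_mult k (fun a c _ => b a c)); [apply is_pd_field2, Eb|].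
  apply (is_pd_comp k (det2 g11 g12 g22) (fun y => Rpower (sqrt y) (- (2 / 3)))).
  - apply is_pd_det2.
  - apply is_derive_Rpower_sqrt, HD. }
assert (Hw0 : 0 < w1 b g11 g12 g22 x1 x2 z)
  by (apply Rmult_lt_0_compat; [auto | apply exp_pos]).
change (T1 s c b g11 g12 g22 b1 b2) with (tensor_plus_ginv s (fun i j _ _ _ => dzz i j)
  (fun x1 x2 z => c + / 2 * w1 b g11 g12 g22 x1 x2 z) (metric1 b g11 g12 g22 b1 b2)).
unfold metric1;
  rewrite (divT_metric_form_plus_ginv _ dw s _ _ (fun _ _ _ => 0) (fun k => / 2 * dw k));
  [| apply Rgt_not_eq, Hw0 | exact Hw | intros; apply is_pd_const | intros; apply is_pd_affine, Hw].
rewrite div_at_dzz_weighted;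
  [ring | apply Rgt_not_eq, Hw0 | exact (Rgt_not_eq _ _ HD) | reflexivity | reflexivity |].
unfold dw, ddet2, w1, absg; simpl; fold D; fold A.
change (g11 x1 x2 z * g22 x1 x2 z - g12 x1 x2 z * g12 x1 x2 z) with D.
field; lra.
Qed.

Lemma divT_metric2_T2 b c s j :
  (forall k, ex_pd2 k b x1 x2) ->
  divT (metric2 g11 g12 g22 b1 b2) (T2 s c b g11 g12 g22 b1 b2) j x1 x2 z = 0.
Proof.
intros Eb.
set (D := det2 g11 g12 g22 x1 x2 z) in HD.
assert (HsD : 0 < sqrt D) by (apply sqrt_lt_R0, HD).
set (df := fun k => pd2 k b x1 x2 * / sqrt D
   + b x1 x2 * (- / 2 * / sqrt D / D * ddet2 g11 g12 g22 k x1 x2 z)).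
assert (Hf : forall k, is_pd k (fun x1 x2 z => b x1 x2 / absg g11 g12 g22 x1 x2 z) x1 x2 z (df k)).
{ intro k; apply (is_pd_mult k (fun a c _ => b a c)); [apply is_pd_field2, Eb|].
  apply (is_pd_comp k (det2 g11 g12 g22) (fun y => / sqrt y)).
  - apply is_pd_det2.
  - apply is_derive_inv_sqrt, HD. }
change (T2 s c b g11 g12 g22 b1 b2) with (tensor_plus_ginv s
  (fun i j x1 x2 z => b x1 x2 / absg g11 g12 g22 x1 x2 z * dzz i j)
  (fun _ _ _ => c) (metric2 g11 g12 g22 b1 b2)).
unfold metric2;
  rewrite (divT_metric_form_plus_ginv _ (fun _ => 0) s _ _ (fun k a b => df k * dzz a b)
  (fun _ => 0)); [| lra | intros; apply is_pd_const
  | intros; apply is_pd_mult_const, Hf | intros; apply is_pd_const].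
rewrite div_at_scaled_dzz;
  [cbv [sum3]; ring | exact (Rgt_not_eq _ _ HD) | reflexivity | reflexivity |].
unfold df, ddet2, absg; simpl; fold D.
change (g11 x1 x2 z * g22 x1 x2 z - g12 x1 x2 z * g12 x1 x2 z) with D.
field; lra.
Qed.

End MomentumAtPoint.

Section MomentumConstraint.

Variables (U : R -> R -> R -> Prop) (g11 g12 g22 : Field3) (b1 b2 b : Field2).
Hypotheses (Hg11 : C1_3 U g11) (Hg12 : C1_3 U g12) (Hg22 : C1_3 U g22).
Hypotheses (Hb1 : C1_2 (fun x1 x2 => exists z, U x1 x2 z) b1)
  (Hb2 : C1_2 (fun x1 x2 => exists z, U x1 x2 z) b2)
  (Hb : C1_2 (fun x1 x2 => exists z, U x1 x2 z) b).
Hypothesis Hdet : forall x1 x2 z, U x1 x2 z -> 0 < det2 g11 g12 g22 x1 x2 z.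

Lemma ex_pd_gab x1 x2 z k : U x1 x2 z ->
  ex_pd k g11 x1 x2 z /\ ex_pd k g12 x1 x2 z /\ ex_pd k g22 x1 x2 z.
Proof. intros HU; repeat split; [apply Hg11 | apply Hg12 | apply Hg22]; auto. Qed.

Lemma ex_pd2_of_C1_2 (f : Field2) x1 x2 z k :
  C1_2 (fun x1 x2 => exists z, U x1 x2 z) f -> U x1 x2 z -> ex_pd2 k f x1 x2.
Proof. intros Hf HU; apply (proj2 (Hf x1 x2 (ex_intro _ z HU)) k). Qed.

Lemma momentum_constraint_metric1 c s :
  (forall x1 x2 z, U x1 x2 z -> 0 < b x1 x2) ->
  momentum_constraint U (metric1 b g11 g12 g22 b1 b2) (T1 s c b g11 g12 g22 b1 b2).
Proof.
intros Hbpos x1 x2 z HU j.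
apply divT_metric1_T1; eauto using ex_pd_gab, ex_pd2_of_C1_2.
Qed.

Lemma momentum_constraint_metric2 c s :
  momentum_constraint U (metric2 g11 g12 g22 b1 b2) (T2 s c b g11 g12 g22 b1 b2).
Proof.
intros x1 x2 z HU j.
apply divT_metric2_T2; eauto using ex_pd_gab, ex_pd2_of_C1_2.
Qed.

End MomentumConstraint.

(** * Straightening coordinates *)

Lemma continuous_2d_iff (F : R -> R -> R) t y :
  continuous (fun q : R * R => F (fst q) (snd q)) (t, y) <-> continuity_2d_pt F t y.
Proof. symmetry; apply continuity_2d_pt_filterlim. Qed.

Lemma continuity_2d_pt_slice (F : R -> R -> R) t y :
  continuity_2d_pt F t y -> continuous (fun s => F s y) t.
Proof.
intros H; apply continuous_2d_iff in H.
apply (continuous_comp_2 (fun s : R => s) (fun _ : R => y) F t); auto.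
- apply continuous_id.
- apply continuous_const.
Qed.

Lemma continuity_2d_pt_swap (F : R -> R -> R) t y :
  continuity_2d_pt F t y -> continuity_2d_pt (fun u v => F v u) y t.
Proof. intros H eps; destruct (H eps) as [d Hd]; exists d; intros u v Hu Hv; auto. Qed.

Lemma continuity_2d_pt_uniform (F : R -> R -> R) a b c :
  (forall x, a <= x <= b -> continuity_2d_pt F x c) ->
  forall eps : posreal, exists delta : posreal, forall x u v,
    a <= x <= b -> a <= u <= b -> Rabs (v - c) < delta -> Rabs (u - x) < delta ->
    Rabs (F u v - F x c) < eps.
Proof.
intros HF eps; destruct (uniform_continuity_2d_1d F a b c HF eps) as [delta Hd].
exists delta; intros x u v Hx Hu Hv Hux.
apply Rabs_lt_between' in Hv; apply Hd; auto; pose proof (cond_pos delta); lra.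
Qed.

Lemma abs_RInt_le_abs (f : R -> R) a b M : ex_RInt f a b ->
  (forall t, Rmin a b <= t <= Rmax a b -> Rabs (f t) <= M) ->
  Rabs (RInt f a b) <= Rabs (b - a) * M.
Proof.
intros Hf HM; destruct (Rle_dec a b) as [Hab | Hab].
- rewrite (Rabs_right (b - a)) by lra; apply abs_RInt_le_const; auto.
  intros t Ht; apply HM; rewrite Rmin_left, Rmax_right; lra.
- rewrite <- (opp_RInt_swap f b a) by (apply ex_RInt_swap; auto).
  change (Rabs (- RInt f b a) <= Rabs (b - a) * M).
  rewrite Rabs_Ropp, (Rabs_left (b - a)), Ropp_minus_distr by lra.
  apply abs_RInt_le_const; [lra | apply ex_RInt_swap; auto |].
  intros t Ht; apply HM; rewrite Rmin_right, Rmax_left; lra.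
Qed.

Lemma Rabs_le_segment a d p q t : Rabs (p - a) <= d -> Rabs (q - a) <= d ->
  Rmin p q <= t <= Rmax p q -> Rabs (t - a) <= d.
Proof.
rewrite !Rabs_le_between'; intros Hp Hq Ht.
destruct (Rle_dec p q);
  [rewrite Rmin_left, Rmax_right in Ht | rewrite Rmin_right, Rmax_left in Ht]; lra.
Qed.

Section ParametricIntegral.

Variables (F : R -> R -> R) (a c d : R).
Hypothesis HF : forall t y, Rabs (t - a) <= d -> Rabs (y - c) <= d -> continuity_2d_pt F t y.

Lemma ex_RInt_square v p q :
  Rabs (v - c) <= d -> Rabs (p - a) <= d -> Rabs (q - a) <= d ->
  ex_RInt (fun t => F t v) p q.
Proof.
intros Hv Hp Hq; apply (ex_RInt_continuous (V := R_CompleteNormedModule)); intros t Ht.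
apply continuity_2d_pt_slice, HF; auto; apply (Rabs_le_segment a d p q t); auto.
Qed.

Lemma RInt_param_uniform x2 : Rabs (x2 - c) < d ->
  forall eps : posreal, exists delta : posreal, forall u v,
    Rabs (u - a) <= d -> Rabs (v - x2) < delta ->
    Rabs (RInt (fun t => F t v) a u - RInt (fun t => F t x2) a u) < eps.
Proof.
intros H2 eps.
assert (Hd : 0 < d) by (pose proof (Rabs_pos (x2 - c)); lra).
assert (He' : 0 < eps / (d + 1)) by (apply Rdiv_lt_0_compat; [apply cond_pos | lra]).
destruct (continuity_2d_pt_uniform F (a - d) (a + d) x2
  ltac:(intros x Hx; apply HF; [apply Rabs_le_between'; lra | lra]) (mkposreal _ He'))
  as [d1 Hd1]; simpl in Hd1.
assert (Hd2 : 0 < Rmin d1 (d - Rabs (x2 - c))) by (apply Rmin_pos; [apply cond_pos | lra]).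
exists (mkposreal _ Hd2); simpl; intros u v Hu Hv.
pose proof (Rmin_l d1 (d - Rabs (x2 - c))); pose proof (Rmin_r d1 (d - Rabs (x2 - c))).
assert (Hvc : Rabs (v - c) <= d).
{ replace (v - c) with ((v - x2) + (x2 - c)) by ring.
  pose proof (Rabs_triang (v - x2) (x2 - c)); lra. }
assert (Haa : Rabs (a - a) <= d) by (rewrite Rminus_diag, Rabs_R0; lra).
assert (E : RInt (fun t => F t v - F t x2) a u
            = RInt (fun t => F t v) a u - RInt (fun t => F t x2) a u)
  by exact (RInt_minus (V := R_CompleteNormedModule) _ _ a u
              (ex_RInt_square v a u Hvc Haa Hu) (ex_RInt_square x2 a u (Rlt_le _ _ H2) Haa Hu)).
rewrite <- E; eapply Rle_lt_trans.
- apply (abs_RInt_le_abs _ a u (eps / (d + 1))).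
  + apply (ex_RInt_minus (V := R_NormedModule)); apply ex_RInt_square; auto; lra.
  + intros t Ht; assert (Ht' : Rabs (t - a) <= d) by (apply (Rabs_le_segment a d a u t); auto).
    apply Rabs_le_between' in Ht'; apply Rlt_le, Hd1; try lra.
    rewrite Rminus_diag, Rabs_R0; apply cond_pos.
- pose proof (cond_pos eps).
  apply Rle_lt_trans with (d * (eps / (d + 1))); [apply Rmult_le_compat_r; lra|].
  apply Rmult_lt_reg_r with (d + 1); [lra|]; field_simplify; lra.
Qed.

Lemma RInt_param_continuous x1 x2 : Rabs (x1 - a) < d -> Rabs (x2 - c) < d ->
  continuity_2d_pt (fun u v => RInt (fun t => F t v) a u) x1 x2.
Proof.
intros H1 H2 eps.
assert (Hhalf : 0 < eps / 2) by (apply Rdiv_lt_0_compat; [apply cond_pos | lra]).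
destruct (RInt_param_uniform x2 H2 (mkposreal _ Hhalf)) as [d1 Hd1]; simpl in Hd1.
assert (Hr : 0 < d - Rabs (x1 - a)) by lra.
assert (Hloc : locally x1 (fun u => Rabs (u - a) <= d)).
{ exists (mkposreal _ Hr); intros u Hu; change (Rabs (u - x1) < d - Rabs (x1 - a)) in Hu.
  replace (u - a) with ((u - x1) + (x1 - a)) by ring.
  pose proof (Rabs_triang (u - x1) (x1 - a)); lra. }
assert (Hc : continuous (fun u => RInt (fun t => F t x2) a u) x1).
{ apply (continuous_RInt_1 (fun t => F t x2) a x1); revert Hloc; apply filter_imp; intros u Hu.
  apply (RInt_correct (V := R_CompleteNormedModule)), ex_RInt_square; auto; try lra.
  rewrite Rminus_diag, Rabs_R0; pose proof (Rabs_pos (x1 - a)); lra. }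
destruct (filter_and _ _ Hloc (proj1 (filterlim_locally _ _) Hc (mkposreal _ Hhalf)))
  as [d2 Hd2].
exists (mkposreal _ (Rmin_pos _ _ (cond_pos d1) (cond_pos d2))); simpl; intros u v Hu Hv.
change (Rabs (u - x1) < Rmin d1 d2) in Hu; change (Rabs (v - x2) < Rmin d1 d2) in Hv.
pose proof (Rmin_l d1 d2); pose proof (Rmin_r d1 d2).
destruct (Hd2 u ltac:(change (Rabs (u - x1) < d2); lra)) as [Hua Hball].
specialize (Hd1 u v Hua ltac:(lra)); change (Rabs (RInt (fun t => F t x2) a u
  - RInt (fun t => F t x2) a x1) < eps / 2) in Hball.
replace (RInt (fun t => F t v) a u - RInt (fun t => F t x2) a x1) with
  ((RInt (fun t => F t v) a u - RInt (fun t => F t x2) a u)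
   + (RInt (fun t => F t x2) a u - RInt (fun t => F t x2) a x1)) by ring.
pose proof (Rabs_triang (RInt (fun t => F t v) a u - RInt (fun t => F t x2) a u)
  (RInt (fun t => F t x2) a u - RInt (fun t => F t x2) a x1)); lra.
Qed.

End ParametricIntegral.

Definition square (a c d : R) (x1 x2 : R) : Prop := Rabs (x1 - a) < d /\ Rabs (x2 - c) < d.

Lemma open2_square a c d : open2 (square a c d).
Proof.
intros [x y] [H1 H2]; simpl in *.
assert (Hr : 0 < Rmin (d - Rabs (x - a)) (d - Rabs (y - c))) by (apply Rmin_pos; lra).
exists (mkposreal _ Hr); intros [u v] [Hu Hv]; simpl in *.
change (Rabs (u - x) < Rmin (d - Rabs (x - a)) (d - Rabs (y - c))) in Hu.
change (Rabs (v - y) < Rmin (d - Rabs (x - a)) (d - Rabs (y - c))) in Hv.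
pose proof (Rmin_l (d - Rabs (x - a)) (d - Rabs (y - c))).
pose proof (Rmin_r (d - Rabs (x - a)) (d - Rabs (y - c))).
split.
- replace (u - a) with ((u - x) + (x - a)) by ring.
  pose proof (Rabs_triang (u - x) (x - a)); lra.
- replace (v - c) with ((v - y) + (y - c)) by ring.
  pose proof (Rabs_triang (v - y) (y - c)); lra.
Qed.

Lemma locally_square a c d x1 x2 : square a c d x1 x2 ->
  locally (x1, x2) (fun q : R * R => square a c d (fst q) (snd q)).
Proof. intros H; exact (open2_square a c d (x1, x2) H). Qed.

Definition coord2 (x1 x2 : R) : R := x2.

Lemma pd2_coord2 x1 x2 : pd2 I1 coord2 x1 x2 = 0 /\ pd2 I2 coord2 x1 x2 = 1.
Proof. split; [exact (Derive_const x2 x1) | exact (Derive_id x2)]. Qed.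

Lemma C1_2_coord2 D : C1_2 D coord2.
Proof.
intros x1 x2 _; split; [apply continuous_snd|].
intros [| |]; split.
- exact (ex_derive_const x2 x1).
- apply (continuous_ext (fun _ => 0));
    [intros; symmetry; apply pd2_coord2 | apply continuous_const].
- exact (ex_derive_id x2).
- apply (continuous_ext (fun _ => 1));
    [intros; symmetry; apply pd2_coord2 | apply continuous_const].
- exact I.
- apply continuous_const.
Qed.

Definition regular_on_square (K : Field2) (a c d : R) : Prop :=
  forall t y, Rabs (t - a) <= d -> Rabs (y - c) <= d ->
    continuity_2d_pt K t y /\ continuity_2d_pt (pd2 I2 K) t y /\ ex_pd2 I2 K t y /\ 0 < K t y.

Section Straightening.

Variables (K : Field2) (a c d : R).
Hypothesis HK : regular_on_square K a c d.

Definition straighten (x1 x2 : R) : R := RInt (fun t => K t x2) a x1.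

Let HKc t y : Rabs (t - a) <= d -> Rabs (y - c) <= d -> continuity_2d_pt K t y.
Proof. intros; apply HK; auto. Qed.

Let HKc2 t y : Rabs (t - a) <= d -> Rabs (y - c) <= d -> continuity_2d_pt (pd2 I2 K) t y.
Proof. intros; apply HK; auto. Qed.

Lemma is_derive_straighten_1 x1 x2 : square a c d x1 x2 ->
  is_derive (fun t => straighten t x2) x1 (K x1 x2).
Proof.
intros [H1 H2]; unfold straighten; pose proof (Rabs_pos (x1 - a)).
apply (is_derive_RInt (fun t => K t x2) (fun b => RInt (fun t => K t x2) a b) a x1).
- exists (mkposreal _ (proj2 (Rlt_0_minus _ _) H1)); intros y Hy; simpl in Hy.
  change (Rabs (y - x1) < d - Rabs (x1 - a)) in Hy.
  apply (RInt_correct (V := R_CompleteNormedModule)), (ex_RInt_square K a c d HKc); try lra.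
  + rewrite Rminus_diag, Rabs_R0; lra.
  + replace (y - a) with ((y - x1) + (x1 - a)) by ring.
    pose proof (Rabs_triang (y - x1) (x1 - a)); lra.
- apply continuity_2d_pt_slice, HKc; lra.
Qed.

Lemma is_derive_straighten_2 x1 x2 : square a c d x1 x2 ->
  is_derive (fun y => straighten x1 y) x2 (RInt (fun t => pd2 I2 K t x2) a x1).
Proof.
intros [H1 H2]; unfold straighten; pose proof (Rabs_pos (x1 - a)).
assert (Haa : Rabs (a - a) <= d) by (rewrite Rminus_diag, Rabs_R0; lra).
assert (Hseg : forall t, Rmin a x1 <= t <= Rmax a x1 -> Rabs (t - a) <= d)
  by (intros t Ht; apply (Rabs_le_segment a d a x1 t); auto; lra).
assert (Hnear : locally x2 (fun y => Rabs (y - c) <= d)).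
{ exists (mkposreal _ (proj2 (Rlt_0_minus _ _) H2)); intros y Hy; simpl in Hy.
  change (Rabs (y - x2) < d - Rabs (x2 - c)) in Hy.
  replace (y - c) with ((y - x2) + (x2 - c)) by ring.
  pose proof (Rabs_triang (y - x2) (x2 - c)); lra. }
apply (is_derive_RInt_param (fun u t => K t u) a x1 x2).
- revert Hnear; apply filter_imp; intros y Hy t Ht; apply HK; auto.
- intros t Ht; apply (continuity_2d_pt_swap (pd2 I2 K)), HKc2; auto; lra.
- revert Hnear; apply filter_imp; intros y Hy.
  apply (ex_RInt_square K a c d HKc); auto; lra.
Qed.

Lemma pd2_straighten_1 x1 x2 : square a c d x1 x2 -> pd2 I1 straighten x1 x2 = K x1 x2.
Proof. intros H; apply is_derive_unique, is_derive_straighten_1, H. Qed.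

Lemma pd2_straighten_2 x1 x2 : square a c d x1 x2 ->
  pd2 I2 straighten x1 x2 = RInt (fun t => pd2 I2 K t x2) a x1.
Proof. intros H; apply is_derive_unique, is_derive_straighten_2, H. Qed.

Lemma C1_2_straighten : C1_2 (square a c d) straighten.
Proof.
intros x1 x2 HV; pose proof HV as [H1 H2].
split; [apply continuous_2d_iff, (RInt_param_continuous K a c d HKc); auto|].
intros [| |]; split.
- eexists; apply is_derive_straighten_1, HV.
- apply (continuous_ext_loc _ (fun q : R * R => K (fst q) (snd q))).
  + generalize (locally_square a c d x1 x2 HV); apply filter_imp; intros q Hq.
    symmetry; apply pd2_straighten_1, Hq.
  + apply continuous_2d_iff, HKc; lra.
- eexists; apply is_derive_straighten_2, HV.
- apply (continuous_ext_loc _ (fun q : R * R => RInt (fun t => pd2 I2 K t (snd q)) a (fst q))).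
  + generalize (locally_square a c d x1 x2 HV); apply filter_imp; intros q Hq.
    symmetry; apply pd2_straighten_2, Hq.
  + apply (continuous_2d_iff (fun u v => RInt (fun t => pd2 I2 K t v) a u)).
    apply (RInt_param_continuous (pd2 I2 K) a c d HKc2); auto.
- exact I.
- apply continuous_const.
Qed.

Lemma straighten_lt x1 y1 x2 : square a c d x1 x2 -> square a c d y1 x2 -> x1 < y1 ->
  straighten x1 x2 < straighten y1 x2.
Proof.
intros [H1 H2] [H3 _] Hlt; unfold straighten; pose proof (Rabs_pos (x1 - a)).
assert (Haa : Rabs (a - a) <= d) by (rewrite Rminus_diag, Rabs_R0; lra).
rewrite <- (RInt_Chasles (V := R_CompleteNormedModule) (fun t => K t x2) a x1 y1)
  by (apply (ex_RInt_square K a c d HKc); lra).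
assert (Hseg : forall t, x1 <= t <= y1 -> Rabs (t - a) <= d)
  by (intros t Ht; apply (Rabs_le_segment a d x1 y1 t); try lra;
      rewrite Rmin_left, Rmax_right; lra).
assert (0 < RInt (fun t => K t x2) x1 y1); [|simpl; unfold plus; simpl; lra].
apply RInt_gt_0; auto.
- intros t Ht; apply HK; [apply Hseg | ]; lra.
- intros t Ht; apply continuity_2d_pt_slice, HKc; [apply Hseg |]; lra.
Qed.

Lemma coord_change_straighten : coord_change (square a c d) straighten coord2.
Proof.
split; [apply C1_2_straighten|]; split; [apply C1_2_coord2|]; split.
- intros x1 x2 y1 y2 Hx Hy E1 E2; unfold coord2 in E2; subst y2; split; auto.
  destruct (Rtotal_order x1 y1) as [Hl | [He | Hg]]; auto.
  + pose proof (straighten_lt x1 y1 x2 Hx Hy Hl); lra.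
  + pose proof (straighten_lt y1 x1 x2 Hy Hx Hg); lra.
- intros x1 x2 Hx; rewrite pd2_straighten_1 by exact Hx.
  destruct (pd2_coord2 x1 x2) as [-> ->].
  destruct Hx as [H1 H2]; destruct (HK x1 x2) as (_ & _ & _ & Hp); try lra.
Qed.

End Straightening.

(** * Change of coordinates *)

(* Jacobian of [(x1, x2, z) |-> (phi1, phi2, z)] when [d phi1 = K dx1 + m dx2]
   and [d phi2 = dx2]. *)
Definition jac_at (K m : R) (k i : idx) : R :=
  match k, i with
  | I1, I1 => K | I1, I2 => m | I2, I2 => 1 | IZ, IZ => 1 | _, _ => 0
  end.

Lemma jac_eq_jac_at phi1 phi2 x1 x2 k i :
  pd2 I1 phi2 x1 x2 = 0 /\ pd2 I2 phi2 x1 x2 = 1 ->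
  jac phi1 phi2 k i x1 x2 = jac_at (pd2 I1 phi1 x1 x2) (pd2 I2 phi1 x1 x2) k i.
Proof. intros [H1 H2]; destruct k, i; simpl; auto. Qed.

Lemma det2_pushforward p q r K m : K <> 0 ->
  p / (K * K) * (m * m * p / (K * K) - 2 * m * q / K + r)
  - (q - m * p / K) / K * ((q - m * p / K) / K) = (p * r - q * q) / (K * K).
Proof. intros; field; auto. Qed.

Lemma metric_form_at_pushforward w u v p q r K m i j : K <> 0 ->
  metric_form_at w u v p q r i j =
  sum3 (fun k => sum3 (fun l => jac_at K m k i * jac_at K m l j *
    metric_form_at w (u / K) (v - m * u / K) (p / (K * K)) ((q - m * p / K) / K)
      (m * m * p / (K * K) - 2 * m * q / K + r) k l)).
Proof. intros HK; destruct i, j; cbv [sum3 jac_at metric_form_at theta_at gab_at]; field; auto. Qed.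

Lemma inv3_metric_form_at_pushforward w u v p q r K m k l :
  K <> 0 -> w <> 0 -> p * r - q * q <> 0 ->
  inv3 (metric_form_at w (u / K) (v - m * u / K) (p / (K * K)) ((q - m * p / K) / K)
          (m * m * p / (K * K) - 2 * m * q / K + r)) k l =
  sum3 (fun i => sum3 (fun j => jac_at K m k i * jac_at K m l j *
    inv3 (metric_form_at w u v p q r) i j)).
Proof.
intros HK Hw HD; unfold inv3; rewrite !det3_metric_form_at, det2_pushforward by auto.
destruct k, l; cbv [sum3 jac_at metric_form_at theta_at gab_at cof nxt];
field; repeat split; auto.
Qed.

Lemma sqrt_div_square D K : 0 < D -> 0 < K -> sqrt (D / (K * K)) = sqrt D / K.
Proof. intros HD HK; rewrite sqrt_div_alt, sqrt_square by nra; reflexivity. Qed.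

Lemma ln_sqrt B : 0 < B -> ln (sqrt B) = ln B / 2.
Proof.
intros HB; pose proof (sqrt_lt_R0 _ HB).
rewrite <- (sqrt_sqrt B) at 2 by lra; rewrite ln_mult by lra; field.
Qed.

Lemma Rpower_sqrt_div D B : 0 < D -> 0 < B ->
  Rpower (sqrt D / (B * sqrt B)) (- (2 / 3)) = B * Rpower (sqrt D) (- (2 / 3)).
Proof.
intros HD HB; pose proof (sqrt_lt_R0 _ HD); pose proof (sqrt_lt_R0 _ HB).
unfold Rpower; rewrite ln_div, ln_mult, (ln_sqrt B) by nra.
replace (- (2 / 3) * (ln (sqrt D) - (ln B + ln B / 2)))
  with (ln B + - (2 / 3) * ln (sqrt D)) by field.
rewrite exp_plus, exp_ln by lra; reflexivity.
Qed.

Definition inverse2 (V : R -> R -> Prop) (phi1 phi2 : Field2) (y1 y2 : R) : R * R :=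
  epsilon (inhabits (0, 0)) (fun p : R * R =>
    V (fst p) (snd p) /\ phi1 (fst p) (snd p) = y1 /\ phi2 (fst p) (snd p) = y2).

Lemma inverse2_correct V phi1 phi2 x1 x2 : coord_change V phi1 phi2 -> V x1 x2 ->
  inverse2 V phi1 phi2 (phi1 x1 x2) (phi2 x1 x2) = (x1, x2).
Proof.
intros (_ & _ & Hinj & _) HV; unfold inverse2.
match goal with |- epsilon ?i ?P = _ =>
  destruct (epsilon_spec i P (ex_intro _ (x1, x2) (conj HV (conj eq_refl eq_refl))))
    as (Hp & E1 & E2); destruct (epsilon i P) as [p1 p2] end.
simpl in *; destruct (Hinj _ _ _ _ Hp HV E1 E2) as [-> ->]; reflexivity.
Qed.

Section Transformation.

Variables (g11 g12 g22 : Field3) (b1 b2 : Field2)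
  (V : R -> R -> Prop) (phi1 phi2 : Field2) (psi : R -> R -> R * R).
Hypothesis Hpsi : forall x1 x2, V x1 x2 -> psi (phi1 x1 x2) (phi2 x1 x2) = (x1, x2).
Hypothesis Hphi2 : forall x1 x2, pd2 I1 phi2 x1 x2 = 0 /\ pd2 I2 phi2 x1 x2 = 1.
Hypothesis Hphi1 : forall x1 x2, V x1 x2 -> 0 < pd2 I1 phi1 x1 x2.

(* Fields in the new coordinates: composition with the inverse [psi], and
   [g_ab], [beta_a] transformed with the inverse Jacobian. *)
Definition pull2 (f : Field2) (y1 y2 : R) : R := f (fst (psi y1 y2)) (snd (psi y1 y2)).
Definition pull3 (g : Field3) (y1 y2 z : R) : R := g (fst (psi y1 y2)) (snd (psi y1 y2)) z.

Definition new_g11 (y1 y2 z : R) : R :=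
  pull3 g11 y1 y2 z / (pull2 (pd2 I1 phi1) y1 y2 * pull2 (pd2 I1 phi1) y1 y2).
Definition new_g12 (y1 y2 z : R) : R :=
  (pull3 g12 y1 y2 z - pull2 (pd2 I2 phi1) y1 y2 * pull3 g11 y1 y2 z / pull2 (pd2 I1 phi1) y1 y2)
  / pull2 (pd2 I1 phi1) y1 y2.
Definition new_g22 (y1 y2 z : R) : R :=
  pull2 (pd2 I2 phi1) y1 y2 * pull2 (pd2 I2 phi1) y1 y2 * pull3 g11 y1 y2 z
    / (pull2 (pd2 I1 phi1) y1 y2 * pull2 (pd2 I1 phi1) y1 y2)
  - 2 * pull2 (pd2 I2 phi1) y1 y2 * pull3 g12 y1 y2 z / pull2 (pd2 I1 phi1) y1 y2
  + pull3 g22 y1 y2 z.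
Definition new_b1 (y1 y2 : R) : R := pull2 b1 y1 y2 / pull2 (pd2 I1 phi1) y1 y2.
Definition new_b2 (y1 y2 : R) : R :=
  pull2 b2 y1 y2 - pull2 (pd2 I2 phi1) y1 y2 * pull2 b1 y1 y2 / pull2 (pd2 I1 phi1) y1 y2.

Section AtPoint.

Variables (x1 x2 z : R).
Hypothesis HV : V x1 x2.
Hypothesis HD : 0 < det2 g11 g12 g22 x1 x2 z.

Let y1 := phi1 x1 x2.
Let y2 := phi2 x1 x2.
Let K := pd2 I1 phi1 x1 x2.
Let m := pd2 I2 phi1 x1 x2.

Let HK : K <> 0.
Proof. apply Rgt_not_eq, Hphi1, HV. Qed.

Lemma new_metric_form_at (W : Field3) :
  (fun k l => metric_form W new_g11 new_g12 new_g22 new_b1 new_b2 k l y1 y2 z) =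
  metric_form_at (W y1 y2 z) (b1 x1 x2 / K) (b2 x1 x2 - m * b1 x1 x2 / K)
    (g11 x1 x2 z / (K * K)) ((g12 x1 x2 z - m * g11 x1 x2 z / K) / K)
    (m * m * g11 x1 x2 z / (K * K) - 2 * m * g12 x1 x2 z / K + g22 x1 x2 z).
Proof.
rewrite metric_form_at_eq.
unfold new_g11, new_g12, new_g22, new_b1, new_b2, pull2, pull3, y1, y2.
rewrite Hpsi by exact HV; reflexivity.
Qed.

Lemma absg_new : absg new_g11 new_g12 new_g22 y1 y2 z = absg g11 g12 g22 x1 x2 z / K.
Proof.
unfold absg, det2, new_g11, new_g12, new_g22, pull2, pull3, y1, y2.
rewrite Hpsi by exact HV; simpl; fold K m.
rewrite det2_pushforward by exact HK.
apply sqrt_div_square; [exact HD | apply Hphi1, HV].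
Qed.

Lemma metric_form_transforms (W W' : Field3) : W' y1 y2 z = W x1 x2 z ->
  forall i j, metric_form W g11 g12 g22 b1 b2 i j x1 x2 z =
   sum3 (fun k => sum3 (fun l => jac phi1 phi2 k i x1 x2 * jac phi1 phi2 l j x1 x2
       * metric_form W' new_g11 new_g12 new_g22 new_b1 new_b2 k l y1 y2 z)).
Proof.
intros HW i j.
change (metric_form W g11 g12 g22 b1 b2 i j x1 x2 z) with
  ((fun k l => metric_form W g11 g12 g22 b1 b2 k l x1 x2 z) i j).
rewrite metric_form_at_eq, (metric_form_at_pushforward _ _ _ _ _ _ K m) by exact HK.
rewrite <- HW, <- (new_metric_form_at W').
cbv [sum3]; rewrite !jac_eq_jac_at by apply Hphi2; reflexivity.
Qed.

Lemma ginv_transforms (W W' : Field3) : W' y1 y2 z = W x1 x2 z -> W x1 x2 z <> 0 ->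
  forall k l, ginv (metric_form W' new_g11 new_g12 new_g22 new_b1 new_b2) k l y1 y2 z =
  sum3 (fun i => sum3 (fun j => jac phi1 phi2 k i x1 x2 * jac phi1 phi2 l j x1 x2 *
     ginv (metric_form W g11 g12 g22 b1 b2) i j x1 x2 z)).
Proof.
intros HW HW0 k l; unfold ginv.
rewrite new_metric_form_at, metric_form_at_eq, HW.
rewrite inv3_metric_form_at_pushforward by (auto; unfold det2 in HD; lra).
cbv [sum3]; rewrite !jac_eq_jac_at by apply Hphi2; reflexivity.
Qed.

Lemma w1_new b : K = b x1 x2 * sqrt (b x1 x2) -> 0 < b x1 x2 ->
  w1 (fun _ _ => 1) new_g11 new_g12 new_g22 y1 y2 z = w1 b g11 g12 g22 x1 x2 z.
Proof.
intros HKb Hb; unfold w1; rewrite absg_new, Rmult_1_l, HKb.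
apply Rpower_sqrt_div; auto.
Qed.

Lemma T1_transforms b c s : K = b x1 x2 * sqrt (b x1 x2) -> 0 < b x1 x2 ->
  forall k l, T1 s c (fun _ _ => 1) new_g11 new_g12 new_g22 new_b1 new_b2 k l y1 y2 z =
    sum3 (fun i => sum3 (fun j => jac phi1 phi2 k i x1 x2 * jac phi1 phi2 l j x1 x2 *
      T1 s c b g11 g12 g22 b1 b2 i j x1 x2 z)).
Proof.
intros HKb Hb k l.
assert (HW := w1_new b HKb Hb).
assert (HW0 : w1 b g11 g12 g22 x1 x2 z <> 0)
  by (apply Rgt_not_eq, Rmult_lt_0_compat; [exact Hb | apply exp_pos]).
unfold T1, metric1; rewrite HW, (ginv_transforms _ _ HW HW0 k l).
cbv [sum3]; rewrite !jac_eq_jac_at by apply Hphi2.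
destruct k, l; cbv [jac_at dzz]; ring.
Qed.

Lemma T2_transforms b c s : K = b x1 x2 ->
  forall k l, T2 s c (fun _ _ => 1) new_g11 new_g12 new_g22 new_b1 new_b2 k l y1 y2 z =
    sum3 (fun i => sum3 (fun j => jac phi1 phi2 k i x1 x2 * jac phi1 phi2 l j x1 x2 *
      T2 s c b g11 g12 g22 b1 b2 i j x1 x2 z)).
Proof.
intros HKb k l.
assert (Habs : 0 < absg g11 g12 g22 x1 x2 z) by (apply sqrt_lt_R0, HD).
unfold T2, metric2.
rewrite (ginv_transforms (fun _ _ _ => 1) (fun _ _ _ => 1) eq_refl R1_neq_R0 k l), absg_new.
replace (1 / (absg g11 g12 g22 x1 x2 z / K)) with (b x1 x2 / absg g11 g12 g22 x1 x2 z)
  by (rewrite <- HKb; field; split; [exact HK | lra]).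
cbv [sum3]; rewrite !jac_eq_jac_at by apply Hphi2.
destruct k, l; cbv [jac_at dzz]; ring.
Qed.

End AtPoint.

Lemma transforms_to_metric1 U b c s :
  (forall x1 x2 z, U x1 x2 z -> 0 < det2 g11 g12 g22 x1 x2 z) ->
  (forall x1 x2 z, U x1 x2 z -> 0 < b x1 x2) ->
  (forall x1 x2, V x1 x2 -> pd2 I1 phi1 x1 x2 = b x1 x2 * sqrt (b x1 x2)) ->
  transforms_to U V phi1 phi2
    (metric1 b g11 g12 g22 b1 b2) (T1 s c b g11 g12 g22 b1 b2)
    (metric1 (fun _ _ => 1) new_g11 new_g12 new_g22 new_b1 new_b2)
    (T1 s c (fun _ _ => 1) new_g11 new_g12 new_g22 new_b1 new_b2).
Proof.
intros Hdet Hb HKb x1 x2 z HU HV; split.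
- apply metric_form_transforms; auto; apply w1_new; eauto.
- intros k l; apply T1_transforms; eauto.
Qed.

Lemma transforms_to_metric2 U b c s :
  (forall x1 x2 z, U x1 x2 z -> 0 < det2 g11 g12 g22 x1 x2 z) ->
  (forall x1 x2, V x1 x2 -> pd2 I1 phi1 x1 x2 = b x1 x2) ->
  transforms_to U V phi1 phi2
    (metric2 g11 g12 g22 b1 b2) (T2 s c b g11 g12 g22 b1 b2)
    (metric2 new_g11 new_g12 new_g22 new_b1 new_b2)
    (T2 s c (fun _ _ => 1) new_g11 new_g12 new_g22 new_b1 new_b2).
Proof.
intros Hdet HKb x1 x2 z HU HV; split.
- apply metric_form_transforms; auto.
- intros k l; apply T2_transforms; auto.
Qed.

End Transformation.

Lemma open3_square U x10 x20 z0 : open3 U -> U x10 x20 z0 ->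
  exists e, 0 < e /\ forall t y, Rabs (t - x10) < e -> Rabs (y - x20) < e -> U t y z0.
Proof.
intros HU H0; destruct (HU ((x10, x20), z0) H0) as [e He].
exists e; split; [apply cond_pos|]; intros t y Ht Hy.
apply (He ((t, y), z0)); split; [split|]; auto.
change (Rabs (z0 - z0) < e); rewrite Rminus_diag, Rabs_R0; apply cond_pos.
Qed.

Section Regularity.

Variables (D : R -> R -> Prop) (f : Field2) (a c e : R).
Hypothesis He : 0 < e.
Hypothesis Hf : C1_2 D f.
Hypothesis Hsq : forall t y, Rabs (t - a) < e -> Rabs (y - c) < e -> D t y /\ 0 < f t y.

Lemma regular_on_square_C1_2 : regular_on_square f a c (e / 2).
Proof.
intros t y Ht Hy; destruct (Hsq t y) as [HD Hpos]; try lra.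
destruct (Hf t y HD) as [Hc Hd]; destruct (Hd I2) as [Ed Hcd].
repeat split; auto; apply continuous_2d_iff; auto.
Qed.

Lemma is_derive_mult_sqrt t y : Rabs (t - a) < e -> Rabs (y - c) < e ->
  is_derive (fun s => f t s * sqrt (f t s)) y (3 / 2 * (sqrt (f t y) * pd2 I2 f t y)).
Proof.
intros H1 H2; destruct (Hsq t y H1 H2) as [HD Hpos].
destruct (proj2 (Hf t y HD) I2) as [Ed _]; simpl in Ed.
pose proof (sqrt_lt_R0 _ Hpos); pose proof (sqrt_sqrt (f t y)).
auto_derive; [repeat split; auto|].
simpl; set (r := sqrt (f t y)) in *; clearbody r; rewrite <- H0 by lra; field; lra.
Qed.

Lemma regular_on_square_mult_sqrt :
  regular_on_square (fun x1 x2 => f x1 x2 * sqrt (f x1 x2)) a c (e / 2).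
Proof.
intros t y Ht Hy; destruct (Hsq t y) as [HD Hpos]; try lra.
destruct (Hf t y HD) as [Hc Hd].
assert (Hsqrt : continuous (fun q : R * R => sqrt (f (fst q) (snd q))) (t, y))
  by (apply (continuous_comp (fun q : R * R => f (fst q) (snd q)) sqrt); auto;
      apply continuous_sqrt).
split; [|split; [|split]].
- apply continuous_2d_iff, (continuous_mult (fun q : R * R => f (fst q) (snd q))); auto.
- apply continuous_2d_iff.
  apply (continuous_ext_loc _ (fun q : R * R => 3 / 2 * (sqrt (f (fst q) (snd q))
           * pd2 I2 f (fst q) (snd q)))).
  + assert (Hr : 0 < e / 2) by lra.
    exists (mkposreal _ Hr); intros [u v] [Hu Hv]; simpl in *.
    change (Rabs (u - t) < e / 2) in Hu; change (Rabs (v - y) < e / 2) in Hv.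
    symmetry; apply is_derive_unique, is_derive_mult_sqrt.
    * replace (u - a) with ((u - t) + (t - a)) by ring.
      pose proof (Rabs_triang (u - t) (t - a)); lra.
    * replace (v - c) with ((v - y) + (y - c)) by ring.
      pose proof (Rabs_triang (v - y) (y - c)); lra.
  + apply (continuous_scal_r (3 / 2)
      (fun q : R * R => sqrt (f (fst q) (snd q)) * pd2 I2 f (fst q) (snd q))).
    apply (continuous_mult (fun q : R * R => sqrt (f (fst q) (snd q)))); auto; apply Hd.
- eexists; apply is_derive_mult_sqrt; lra.
- apply Rmult_lt_0_compat, sqrt_lt_R0; auto.
Qed.

End Regularity.

Lemma square_center a c d : 0 < d -> square a c d a c.
Proof. intros Hd; unfold square; rewrite !Rminus_diag, Rabs_R0; lra. Qed.

Lemma inverse2_straighten K a c d x1 x2 : regular_on_square K a c d -> square a c d x1 x2 ->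
  inverse2 (square a c d) (straighten K a) coord2 (straighten K a x1 x2) (coord2 x1 x2)
  = (x1, x2).
Proof. intros HK Hx; apply inverse2_correct; [apply coord_change_straighten|]; auto. Qed.

Lemma pd2_straighten_pos K a c d x1 x2 : regular_on_square K a c d -> square a c d x1 x2 ->
  0 < pd2 I1 (straighten K a) x1 x2.
Proof.
intros HK Hx; rewrite (pd2_straighten_1 K a c d) by auto.
destruct Hx; apply HK; lra.
Qed.

Lemma straightening_metric1 U g11 g12 g22 b1 b2 b c s :
  open3 U -> C1_2 (fun x1 x2 => exists z, U x1 x2 z) b ->
  (forall x1 x2 z, U x1 x2 z -> 0 < det2 g11 g12 g22 x1 x2 z) ->
  (forall x1 x2 z, U x1 x2 z -> 0 < b x1 x2) ->
  forall x10 x20 z0, U x10 x20 z0 ->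
  exists (V : R -> R -> Prop) (phi1 phi2 : Field2) (h11 h12 h22 : Field3) (e1 e2 : Field2),
    open2 V /\ V x10 x20 /\ coord_change V phi1 phi2 /\
    transforms_to U V phi1 phi2
      (metric1 b g11 g12 g22 b1 b2) (T1 s c b g11 g12 g22 b1 b2)
      (metric1 (fun _ _ => 1) h11 h12 h22 e1 e2) (T1 s c (fun _ _ => 1) h11 h12 h22 e1 e2).
Proof.
intros HU Hb Hdet Hbpos x10 x20 z0 H0.
destruct (open3_square U x10 x20 z0 HU H0) as (e & He & HUe).
set (K := fun x1 x2 => b x1 x2 * sqrt (b x1 x2)).
assert (HK : regular_on_square K x10 x20 (e / 2)).
{ apply (regular_on_square_mult_sqrt (fun x1 x2 => exists z, U x1 x2 z)); auto; try lra.
  intros t y Ht Hy; split; [exists z0 | apply (Hbpos t y z0)]; auto. }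
set (V := square x10 x20 (e / 2)); set (phi1 := straighten K x10).
set (psi := inverse2 V phi1 coord2).
exists V, phi1, coord2, (new_g11 g11 phi1 psi), (new_g12 g11 g12 phi1 psi),
  (new_g22 g11 g12 g22 phi1 psi), (new_b1 b1 phi1 psi), (new_b2 b1 b2 phi1 psi).
split; [apply open2_square|]; split; [apply square_center; lra|].
split; [apply coord_change_straighten, HK|].
apply transforms_to_metric1; auto.
- intros; apply (inverse2_straighten K x10 x20 (e / 2)); auto.
- apply pd2_coord2.
- intros; apply (pd2_straighten_pos K x10 x20 (e / 2)); auto.
- intros; apply (pd2_straighten_1 K x10 x20 (e / 2)); auto.
Qed.

Lemma straightening_metric2 U g11 g12 g22 b1 b2 b c s :
  open3 U -> C1_2 (fun x1 x2 => exists z, U x1 x2 z) b ->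
  (forall x1 x2 z, U x1 x2 z -> 0 < det2 g11 g12 g22 x1 x2 z) ->
  (forall x1 x2 z, U x1 x2 z -> 0 < b x1 x2) ->
  forall x10 x20 z0, U x10 x20 z0 ->
  exists (V : R -> R -> Prop) (phi1 phi2 : Field2) (h11 h12 h22 : Field3) (e1 e2 : Field2),
    open2 V /\ V x10 x20 /\ coord_change V phi1 phi2 /\
    transforms_to U V phi1 phi2
      (metric2 g11 g12 g22 b1 b2) (T2 s c b g11 g12 g22 b1 b2)
      (metric2 h11 h12 h22 e1 e2) (T2 s c (fun _ _ => 1) h11 h12 h22 e1 e2).
Proof.
intros HU Hb Hdet Hbpos x10 x20 z0 H0.
destruct (open3_square U x10 x20 z0 HU H0) as (e & He & HUe).
assert (HK : regular_on_square b x10 x20 (e / 2)).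
{ apply (regular_on_square_C1_2 (fun x1 x2 => exists z, U x1 x2 z)); auto; try lra.
  intros t y Ht Hy; split; [exists z0 | apply (Hbpos t y z0)]; auto. }
set (V := square x10 x20 (e / 2)); set (phi1 := straighten b x10).
set (psi := inverse2 V phi1 coord2).
exists V, phi1, coord2, (new_g11 g11 phi1 psi), (new_g12 g11 g12 phi1 psi),
  (new_g22 g11 g12 g22 phi1 psi), (new_b1 b1 phi1 psi), (new_b2 b1 b2 phi1 psi).
split; [apply open2_square|]; split; [apply square_center; lra|].
split; [apply coord_change_straighten, HK|].
apply transforms_to_metric2; auto.
- intros; apply (inverse2_straighten b x10 x20 (e / 2)); auto.
- apply pd2_coord2.
- intros; apply (pd2_straighten_pos b x10 x20 (e / 2)); auto.
- intros; apply (pd2_straighten_1 b x10 x20 (e / 2)); auto.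
Qed.

Theorem proposition3p2
  (U : R -> R -> R -> Prop) (g11 g12 g22 : Field3) (b1 b2 b : Field2) (c s : R)
  (HU : open3 U)
  (Hg11 : C1_3 U g11) (Hg12 : C1_3 U g12) (Hg22 : C1_3 U g22)
  (Hb1 : C1_2 (fun x1 x2 => exists z, U x1 x2 z) b1)
  (Hb2 : C1_2 (fun x1 x2 => exists z, U x1 x2 z) b2)
  (Hb : C1_2 (fun x1 x2 => exists z, U x1 x2 z) b)
  (Hsig : forall x1 x2 z, U x1 x2 z -> 0 < g11 x1 x2 z /\ 0 < det2 g11 g12 g22 x1 x2 z)
  (Hbpos : forall x1 x2 z, U x1 x2 z -> 0 < b x1 x2)
  (Hs : s = 1 \/ s = -1) :
  momentum_constraint U (metric1 b g11 g12 g22 b1 b2) (T1 s c b g11 g12 g22 b1 b2) /\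
  momentum_constraint U (metric2 g11 g12 g22 b1 b2) (T2 s c b g11 g12 g22 b1 b2) /\
  (forall x10 x20 z0, U x10 x20 z0 ->
     exists (V : R -> R -> Prop) (phi1 phi2 : Field2) (h11 h12 h22 : Field3) (e1 e2 : Field2),
       open2 V /\ V x10 x20 /\ coord_change V phi1 phi2 /\
       transforms_to U V phi1 phi2
         (metric1 b g11 g12 g22 b1 b2) (T1 s c b g11 g12 g22 b1 b2)
         (metric1 (fun _ _ => 1) h11 h12 h22 e1 e2) (T1 s c (fun _ _ => 1) h11 h12 h22 e1 e2)) /\
  (forall x10 x20 z0, U x10 x20 z0 ->
     exists (V : R -> R -> Prop) (phi1 phi2 : Field2) (h11 h12 h22 : Field3) (e1 e2 : Field2),
       open2 V /\ V x10 x20 /\ coord_change V phi1 phi2 /\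
       transforms_to U V phi1 phi2
         (metric2 g11 g12 g22 b1 b2) (T2 s c b g11 g12 g22 b1 b2)
         (metric2 h11 h12 h22 e1 e2) (T2 s c (fun _ _ => 1) h11 h12 h22 e1 e2)).
Proof.
assert (Hdet : forall x1 x2 z, U x1 x2 z -> 0 < det2 g11 g12 g22 x1 x2 z)
  by (intros; apply Hsig; auto).
split; [apply momentum_constraint_metric1; auto|].
split; [apply momentum_constraint_metric2; auto|].
split; [apply straightening_metric1; auto|].
apply straightening_metric2; auto.
Qed.
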